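(* Suppose there is $D>0$ such that for all $\alpha\in(0,\alpha_{\max})$ $$\sum_{\lambda_i\le\alpha}|\langle x^\dagger,u_i\rangle|^2\le D\sum_{\lambda_i\ge\alpha}\frac{\alpha}{\lambda_i}|\langle x^\dagger,u_i\rangle|^2.$$ Then there is a constant $C$ depending only on $D$ (e.g. $C=\sqrt{8(D+1)}$) such that for all $\alpha\in(0,\alpha_{\max})$ $$\|x_\alpha-x^\dagger\|\le C\,\psi_{SL}(\alpha,x^\dagger).$$
   Context: Let $X,Y$ be real Hilbert spaces and $A:X\to Y$ a compact linear operator with singular system $(\sigma_i,u_i,v_i)_i$, $\sigma_i>0$; put $\lambda_i=\sigma_i^2$. Let $x^\dagger\in N(A)^\perp$, $y=Ax^\dagger$, $x_\alpha=(A^*A+\alpha I)^{-1}A^*y$, $\alpha_{\max}>0$ fixed, and $\psi_{SL}(\alpha,x^\dagger):=\Big(\sum_i\frac{\alpha\lambda_i^2}{(\lambda_i+\alpha)^3}|\langle x^\dagger,u_i\rangle|^2\Big)^{1/2}$. *)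

From Stdlib Require Import Reals.
Open Scope R_scope.

(* The singular system is indexed by nat:  lam i = sigma_i^2 > 0,
   c i = <x^dagger, u_i>.  Since x^dagger lies in N(A)^perp = closed span
   of the u_i, x^dagger = sum_i c i u_i with sum_i (c i)^2 < infinity. *)

(* coefficients <x_alpha, u_i> of the Tikhonov solution
   x_alpha = (A^*A + alpha I)^{-1} A^* A x^dagger *)
Definition xalpha_coef (lam c : nat -> R) (alpha : R) (i : nat) : R :=
  lam i / (lam i + alpha) * c i.

(* terms of ||x_alpha - x^dagger||^2 = sum_i |<x_alpha - x^dagger, u_i>|^2 *)
Definition err_term (lam c : nat -> R) (alpha : R) (i : nat) : R :=
  (xalpha_coef lam c alpha i - c i) ^ 2.

(* terms of psi_SL(alpha, x^dagger)^2 *)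
Definition psiSL_term (lam c : nat -> R) (alpha : R) (i : nat) : R :=
  alpha * lam i ^ 2 / (lam i + alpha) ^ 3 * (c i) ^ 2.

Definition low_term (lam c : nat -> R) (alpha : R) (i : nat) : R :=
  if Rle_dec (lam i) alpha then (c i) ^ 2 else 0.

Definition high_term (lam c : nat -> R) (alpha : R) (i : nat) : R :=
  if Rle_dec alpha (lam i) then alpha / lam i * (c i) ^ 2 else 0.

(** Write [a_i = |<x^dagger, u_i>|^2].  Componentwise, the Tikhonov error is
    [(alpha/(lam_i + alpha))^2 a_i].  For [lam_i <= alpha] this is at most
    [a_i], the low-frequency term of the hypothesis; for [lam_i > alpha] it is
    at most twice the [psi_SL] term.  The high-frequency term [(alpha/lam_i) a_i]
    is at most 8 times the [psi_SL] term, since [(lam_i + alpha)^3 <= 8 lam_i^3]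
    for [alpha <= lam_i].  Summing,
    [||x_alpha - x^dagger||^2 <= D (8 psi_SL^2) + 2 psi_SL^2]. *)

From Stdlib Require Import Reals Lra.
Open Scope R_scope.

Lemma Rdiv_le_1 (a b : R) : 0 < b -> a <= b -> a / b <= 1.
Proof.
  intros Hb Hab; rewrite <- (Rdiv_diag b) by lra.
  apply Rmult_le_compat_r; [apply Rlt_le, Rinv_0_lt_compat|]; assumption.
Qed.

Lemma residual_factor_sq_le (l a : R) :
  0 < a <= l -> (a / (l + a)) ^ 2 <= 2 * (a * l ^ 2 / (l + a) ^ 3).
Proof.
  intros Ha.
  assert (Hd : 0 < (l + a) ^ 3) by (apply pow_lt; lra).
  replace ((a / (l + a)) ^ 2) with (a ^ 2 * (l + a) / (l + a) ^ 3) by (field; lra).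
  unfold Rdiv; rewrite <- Rmult_assoc.
  apply Rmult_le_compat_r; [apply Rlt_le, Rinv_0_lt_compat; lra|].
  assert (a * a <= a * l) by nra.
  assert (a * l <= l * l) by nra.
  nra.
Qed.

Lemma ratio_le_psi_factor (l a : R) :
  0 < a <= l -> a / l <= 8 * (a * l ^ 2 / (l + a) ^ 3).
Proof.
  intros Ha.
  assert (Hd : 0 < (l + a) ^ 3) by (apply pow_lt; lra).
  assert (Hcube : (l + a) ^ 3 <= (2 * l) ^ 3) by (apply pow_incr; lra).
  replace (a / l) with (8 * (a * l ^ 2) / (2 * l) ^ 3) by (field; lra).
  unfold Rdiv; rewrite Rmult_assoc.
  apply Rmult_le_compat_l; [lra|].
  apply Rmult_le_compat_l; [nra|].
  now apply Rinv_le_contravar.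
Qed.

Lemma Un_cv_const (k : R) : Un_cv (fun _ => k) k.
Proof. intros e He; exists 0%nat; intros n _; rewrite Rdist_eq; lra. Qed.

Lemma infinite_sum_le (u v : nat -> R) (U V : R) :
  (forall n, u n <= v n) -> infinite_sum u U -> infinite_sum v V -> U <= V.
Proof.
  intros Huv HU HV.
  apply (Rle_cv_lim (Un := sum_f_R0 u) (Vn := sum_f_R0 v)); auto.
  intro n; apply sum_Rle; auto.
Qed.

Lemma infinite_sum_plus (u v : nat -> R) (U V : R) :
  infinite_sum u U -> infinite_sum v V -> infinite_sum (fun n => u n + v n) (U + V).
Proof.
  intros HU HV e He; destruct (CV_plus _ _ _ _ HU HV e He) as [N HN].
  exists N; intros n Hn; rewrite sum_plus; exact (HN n Hn).
Qed.

Lemma infinite_sum_scal (u : nat -> R) (U k : R) :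
  infinite_sum u U -> infinite_sum (fun n => k * u n) (k * U).
Proof.
  intros HU e He; destruct (CV_mult _ _ _ _ (Un_cv_const k) HU e He) as [N HN].
  exists N; intros n Hn.
  replace (sum_f_R0 (fun i => k * u i) n) with (k * sum_f_R0 u n).
  - exact (HN n Hn).
  - rewrite scal_sum; apply sum_eq; intros; apply Rmult_comm.
Qed.

Lemma infinite_sum_comparison (u v : nat -> R) :
  (forall n, 0 <= u n <= v n) -> (exists V, infinite_sum v V) ->
  exists U, infinite_sum u U.
Proof.
  intros Huv [V HV].
  destruct (Rseries_CV_comp u v Huv (exist _ V HV)) as [U HU].
  now exists U.
Qed.

Section FixedAlpha.

Variables (lam c : nat -> R) (alpha : R).
Hypothesis lam_pos : forall i, 0 < lam i.
Hypothesis alpha_pos : 0 < alpha.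

Lemma err_term_eq i : err_term lam c alpha i = (alpha / (lam i + alpha)) ^ 2 * c i ^ 2.
Proof. unfold err_term, xalpha_coef; field; specialize (lam_pos i); lra. Qed.

Lemma err_term_le i :
  err_term lam c alpha i <= low_term lam c alpha i + 2 * psiSL_term lam c alpha i.
Proof.
  rewrite err_term_eq; unfold low_term, psiSL_term.
  specialize (lam_pos i).
  assert (Hc : 0 <= c i ^ 2) by nra.
  assert (Hpsi : 0 <= alpha * lam i ^ 2 / (lam i + alpha) ^ 3).
  { apply Rle_mult_inv_pos; [nra | apply pow_lt; lra]. }
  destruct (Rle_dec (lam i) alpha) as [Hle | Hgt].
  - assert (Hq : 0 <= alpha / (lam i + alpha) <= 1).
    { split; [apply Rle_mult_inv_pos; lra | apply Rdiv_le_1; lra]. }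
    assert ((alpha / (lam i + alpha)) ^ 2 <= 1) by (simpl; nra).
    nra.
  - pose proof (residual_factor_sq_le (lam i) alpha ltac:(lra)). nra.
Qed.

Lemma high_term_le i : high_term lam c alpha i <= 8 * psiSL_term lam c alpha i.
Proof.
  unfold high_term, psiSL_term.
  specialize (lam_pos i).
  assert (Hc : 0 <= c i ^ 2) by nra.
  destruct (Rle_dec alpha (lam i)) as [Hle | _].
  - pose proof (ratio_le_psi_factor (lam i) alpha ltac:(lra)). nra.
  - apply Rmult_le_pos; [lra|].
    apply Rmult_le_pos; [|exact Hc].
    apply Rle_mult_inv_pos; [nra | apply pow_lt; lra].
Qed.

Lemma low_term_bounds i : 0 <= low_term lam c alpha i <= c i ^ 2.
Proof. unfold low_term; destruct (Rle_dec _ _); nra. Qed.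

Lemma high_term_bounds i : 0 <= high_term lam c alpha i <= c i ^ 2.
Proof.
  unfold high_term; specialize (lam_pos i).
  destruct (Rle_dec _ _) as [Hle | _]; [|nra].
  assert (0 <= alpha / lam i <= 1).
  { split; [apply Rle_mult_inv_pos; lra | apply Rdiv_le_1; lra]. }
  nra.
Qed.

Lemma err_sum_le (D E P Slow Shigh : R) :
  0 <= D -> Slow <= D * Shigh ->
  infinite_sum (err_term lam c alpha) E ->
  infinite_sum (psiSL_term lam c alpha) P ->
  infinite_sum (low_term lam c alpha) Slow ->
  infinite_sum (high_term lam c alpha) Shigh ->
  E <= (8 * D + 2) * P.
Proof.
  intros HD Hcond HE HP Hlow Hhigh.
  assert (Herr : E <= Slow + 2 * P).
  { apply (infinite_sum_le _ _ _ _ err_term_le HE).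
    exact (infinite_sum_plus _ _ _ _ Hlow (infinite_sum_scal _ _ 2 HP)). }
  assert (Hhigh_le : Shigh <= 8 * P).
  { exact (infinite_sum_le _ _ _ _ high_term_le Hhigh (infinite_sum_scal _ _ 8 HP)). }
  assert (D * Shigh <= D * (8 * P)) by (apply Rmult_le_compat_l; lra).
  lra.
Qed.

End FixedAlpha.

Theorem mainTheorem6 :
  forall D : R, 0 < D ->
  exists C : R, 0 < C /\
  forall (alpha_max : R) (lam c : nat -> R),
    0 < alpha_max ->
    (forall i, 0 < lam i) ->
    (exists S, infinite_sum (fun i => (c i) ^ 2) S) ->
    (forall alpha, 0 < alpha < alpha_max ->
       forall Slow Shigh,
         infinite_sum (low_term lam c alpha) Slow ->
         infinite_sum (high_term lam c alpha) Shigh ->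
         Slow <= D * Shigh) ->
    forall alpha, 0 < alpha < alpha_max ->
      forall E P,
        infinite_sum (err_term lam c alpha) E ->
        infinite_sum (psiSL_term lam c alpha) P ->
        sqrt E <= C * sqrt P.
Proof.
  intros D HD; exists (sqrt (8 * D + 2)); split; [apply sqrt_lt_R0; lra|].
  intros alpha_max lam c _ Hlam Hsummable Hcond alpha Halpha E P HE HP.
  assert (Halpha0 : 0 < alpha) by lra.
  destruct (infinite_sum_comparison _ _ (low_term_bounds lam c alpha) Hsummable) as [Slow Hlow].
  destruct (infinite_sum_comparison _ _ (high_term_bounds lam c alpha Hlam Halpha0) Hsummable)
    as [Shigh Hhigh].
  rewrite <- sqrt_mult_alt by lra.
  apply sqrt_le_1_alt.
  apply (err_sum_le lam c alpha Hlam Halpha0 D E P Slow Shigh); [lra| |assumption..].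
  exact (Hcond alpha Halpha Slow Shigh Hlow Hhigh).
Qed.
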